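(* Let $S$ be a pool of size $m$ in $[0,1]$, and assume that $\mathrm{err}(S,\mathcal{H}_{\dashv}) \leq k/m$. Then the following procedure finds $\hat{h}$ such that $\mathrm{err}(S,\hat{h}) = \mathrm{err}(S,\mathcal{H}_{\dashv})$ with an auditing complexity of $k+1$: query the labels of the points of $S$ in order from highest to lowest value, stopping once $k+1$ negative labels have been observed, and return a threshold hypothesis in $\mathcal{H}_{\dashv}$ that minimizes the error on the labeled (queried) points.
   Context: The domain is $\mathcal{X}=[0,1]$ with labels in $\{-1,+1\}$. $\mathcal{H}_{\dashv} = \{h_a \mid a \in [0,1]\}$ is the class of thresholds on the line, where the hypothesis with threshold $a$ labels $x$ positive if $x \geq a$ and negative otherwise. For a multiset $S$ of labeled points, $\mathrm{err}(S,h)$ is the fraction of points in $S$ misclassified by $h$, and $\mathrm{err}(S,\mathcal{H}) = \min_{h\in\mathcal{H}}\mathrm{err}(S,h)$. The pool $S$ is given with hidden labels that are revealed only upon querying. The auditing complexity of a procedure is the number of queries it makes on points whose labels are negative (queries returning positive labels are free). *)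

From HB Require Import structures.
From mathcomp Require Import all_boot all_order all_algebra.
From mathcomp Require Import boolp classical_sets reals.
Set Implicit Arguments. Unset Strict Implicit. Unset Printing Implicit Defensive.
Import Order.TTheory GRing.Theory Num.Theory.
Local Open Scope ring_scope.
Local Open Scope classical_set_scope.

(* A labeled point: (x, label); label true = +1, false = -1. *)
Definition lpoint (R : realType) := (R * bool)%type.

Definition thr (R : realType) (a x : R) : bool := a <= x.

Definition err (R : realType) (S : seq (lpoint R)) (h : R -> bool) : R :=
  (count (fun p : lpoint R => h p.1 != p.2) S)%:R / (size S)%:R.

(* err(S,H_thresholds) = min over a in [0,1] (taken as an infimum;
   the min is attained since only finitely many behaviours exist). *)
Definition errH (R : realType) (S : seq (lpoint R)) : R :=
  inf [set err S (thr a) | a in [set a : R | 0 <= a <= 1]].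

(* Points queried when querying s in order and stopping as soon as
   k+1 negative labels have been observed (or s is exhausted). *)
Fixpoint queried (R : realType) (k : nat) (s : seq (lpoint R)) : seq (lpoint R) :=
  match s with
  | [::] => [::]
  | p :: s' =>
      if p.2 then p :: queried k s'
      else match k with
           | 0 => [:: p]
           | k'.+1 => p :: queried k' s'
           end
  end.

(* Auditing complexity: number of queries returning a negative label. *)
Definition n_neg_queries (R : realType) (Q : seq (lpoint R)) : nat :=
  count (fun p : lpoint R => ~~ p.2) Q.

From HB Require Import structures.
From mathcomp Require Import all_boot all_order all_algebra.
From mathcomp Require Import boolp classical_sets reals.
Import Order.TTheory GRing.Theory Num.Theory.
Set Implicit Arguments. Unset Strict Implicit. Unset Printing Implicit Defensive.
Local Open Scope ring_scope.

(* The queried points form a prefix Q of the pool, sorted by decreasing value.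
   If the procedure stops early, Q contains k+1 negative points, all of value at
   least that of any unqueried point. A threshold at or below some unqueried point
   then makes more than k mistakes, so it is not optimal since err(S,H) <= k/m;
   above every unqueried point, the mistakes on the unqueried part are a constant
   (their positives), so minimizing on Q minimizes on S. *)

Definition mistakes (R : realType) (L : seq (lpoint R)) (a : R) : nat :=
  count (fun p : lpoint R => thr a p.1 != p.2) L.

Lemma errE (R : realType) (L : seq (lpoint R)) (a : R) :
  err L (thr a) = (mistakes L a)%:R / (size L)%:R.
Proof. by []. Qed.

Lemma err_le_mistakes_le (R : realType) (L : seq (lpoint R)) (a b : R) :
  err L (thr a) <= err L (thr b) -> (mistakes L a <= mistakes L b)%N.
Proof.
case: L => [|p L] //; rewrite !errE ler_pM2r ?ler_nat //.
by rewrite invr_gt0 ltr0n.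
Qed.

Lemma mistakes_perm (R : realType) (L1 L2 : seq (lpoint R)) (a : R) :
  perm_eq L1 L2 -> mistakes L1 a = mistakes L2 a.
Proof. by rewrite /mistakes => /permP->. Qed.

Lemma mistakes_cat (R : realType) (L1 L2 : seq (lpoint R)) (a : R) :
  mistakes (L1 ++ L2) a = (mistakes L1 a + mistakes L2 a)%N.
Proof. exact: count_cat. Qed.

Lemma n_neg_le_mistakes (R : realType) (L : seq (lpoint R)) (b : R) :
  all (fun p : lpoint R => b <= p.1) L -> (n_neg_queries L <= mistakes L b)%N.
Proof.
move=> /allP Lb; rewrite /n_neg_queries.
rewrite -(eq_in_count (a1 := fun p : lpoint R => ~~ p.2 && (b <= p.1))); last first.
  by move=> p /Lb ->; rewrite andbT.
by apply: sub_count => p /andP[neg bp]; rewrite /thr bp; case: p.2 neg.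
Qed.

Lemma mistakes_above (R : realType) (L : seq (lpoint R)) (b : R) :
  all (fun p : lpoint R => p.1 < b) L ->
  mistakes L b = count (fun p : lpoint R => p.2) L.
Proof.
move=> /allP Lb; apply: eq_in_count => p /Lb pb.
by rewrite /thr leNgt pb; case: p.2.
Qed.

Lemma err_thr_eq_errH (R : realType) (S : seq (lpoint R)) (a : R) :
  0 <= a <= 1 -> (forall b, 0 <= b <= 1 -> (mistakes S a <= mistakes S b)%N) ->
  err S (thr a) = errH S.
Proof.
move=> a01 amin; apply/le_anti/andP; split.
  apply: lb_le_inf; first by exists (err S (thr a)), a.
  by move=> _ [b b01 <-]; rewrite !errE ler_wpM2r ?invr_ge0 ?ler0n ?ler_nat ?amin.
apply: ge_inf; last by exists a.
by exists 0 => _ [b _ <-]; rewrite errE divr_ge0.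
Qed.

Lemma errH_le_exists (R : realType) (k : nat) (S : seq (lpoint R)) :
  errH S <= k%:R / (size S)%:R -> exists2 a : R, 0 <= a <= 1 & (mistakes S a <= k)%N.
Proof.
case: S => [|p S] errHS; first by exists 0; rewrite ?lexx ?ler01.
have [//|none] := pselect (exists2 a : R, 0 <= a <= 1 & (mistakes (p :: S) a <= k)%N).
have lbS : k.+1%:R / (size (p :: S))%:R <= errH (p :: S).
  apply: lb_le_inf; first by exists (err (p :: S) (thr 0)), 0; rewrite //= lexx ler01.
  move=> _ [b b01 <-]; rewrite errE ler_wpM2r ?invr_ge0 ?ler0n // ler_nat.
  by rewrite ltnNge; apply/negP => bk; apply: none; exists b.
have := le_trans lbS errHS.
by rewrite ler_pM2r ?invr_gt0 ?ltr0n // ler_nat ltnn.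
Qed.

Lemma ge_fst_trans (R : realType) : transitive (fun p q : lpoint R => q.1 <= p.1).
Proof. by move=> y x z yx zy; apply: le_trans zy yx. Qed.

Section QueriedPrefix.
Variables (R : realType) (k : nat) (s : seq (lpoint R)).

Lemma queried_prefix : prefix (queried k s) s.
Proof.
by elim: s k => [|[x []] s' IH] [|k'] //=; rewrite eqxx ?IH ?prefix0s.
Qed.

Lemma n_neg_queried_le : (n_neg_queries (queried k s) <= k.+1)%N.
Proof.
by elim: s k => [|[x []] s' IH] [|k'] //=; apply: IH.
Qed.

Lemma queried_all_of_few_neg :
  (n_neg_queries (queried k s) <= k)%N -> queried k s = s.
Proof.
by elim: s k => [|[x []] s' IH] [|k'] //= few; rewrite IH.
Qed.

End QueriedPrefix.

Section PrefixMinimizer.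
Variables (R : realType) (k : nat) (Q r : seq (lpoint R)) (D : set R).
Hypothesis Qr_sep : allrel (fun p q : lpoint R => q.1 <= p.1) Q r.
Hypothesis Q_many_neg : (k < n_neg_queries Q)%N.

Lemma mistakes_below_rest b :
  has (fun q : lpoint R => b <= q.1) r -> (k < mistakes Q b)%N.
Proof.
case/hasP=> q qr bq; apply: leq_trans Q_many_neg (n_neg_le_mistakes _).
by apply/allP=> p pQ; apply: le_trans bq (allrelP Qr_sep p q pQ qr).
Qed.

Lemma prefix_minimizer (agood ahat : R) :
  D agood -> (mistakes (Q ++ r) agood <= k)%N ->
  (forall b, D b -> (mistakes Q ahat <= mistakes Q b)%N) ->
  forall b, D b -> (mistakes (Q ++ r) ahat <= mistakes (Q ++ r) b)%N.
Proof.
move=> Dgood good hatmin.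
have above_rest a : (mistakes Q a <= k)%N -> all (fun q : lpoint R => q.1 < a) r.
  move=> fewQ; apply/allP => q qr; rewrite ltNge; apply/negP => aq.
  have /mistakes_below_rest : has (fun q : lpoint R => a <= q.1) r by apply/hasP; exists q.
  by rewrite ltnNge fewQ.
have goodQ : (mistakes Q agood <= k)%N.
  by apply: leq_trans good; rewrite mistakes_cat leq_addr.
have hatQ : (mistakes Q ahat <= k)%N := leq_trans (hatmin _ Dgood) goodQ.
have hat_le a : D a -> (mistakes Q a <= k)%N ->
    (mistakes (Q ++ r) ahat <= mistakes (Q ++ r) a)%N.
  move=> Da fewQ; rewrite !mistakes_cat (mistakes_above (above_rest _ hatQ)).
  by rewrite (mistakes_above (above_rest _ fewQ)) leq_add2r hatmin.
move=> b Db; have [bQ|bQ] := leqP (mistakes Q b) k; first exact: hat_le.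
apply: leq_trans (hat_le _ Dgood goodQ) (leq_trans good (ltnW _)).
by apply: leq_trans bQ _; rewrite mistakes_cat leq_addr.
Qed.

End PrefixMinimizer.

Theorem lemma3 (R : realType) (k : nat) (S : seq (lpoint R))
    (s : seq (lpoint R)) (ahat : R) :
  all (fun p : lpoint R => (0 <= p.1) && (p.1 <= 1)) S ->
  errH S <= k%:R / (size S)%:R ->
  perm_eq s S ->
  sorted (fun p q : lpoint R => q.1 <= p.1) s ->
  0 <= ahat <= 1 ->
  (forall b : R, 0 <= b <= 1 ->
     err (queried k s) (thr ahat) <= err (queried k s) (thr b)) ->
  err S (thr ahat) = errH S /\ (n_neg_queries (queried k s) <= k.+1)%N.
Proof.
(* The pool need not lie in [0,1]. *)
move=> _ errHS sS s_sorted ahat01 ahat_min.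
split; last exact: n_neg_queried_le.
have mistakesS a : mistakes S a = mistakes s a by rewrite (mistakes_perm _ sS).
have Q_min b : 0 <= b <= 1 -> (mistakes (queried k s) ahat <= mistakes (queried k s) b)%N.
  by move=> b01; apply/err_le_mistakes_le/ahat_min.
apply: err_thr_eq_errH => // b b01; rewrite !mistakesS.
have [few|many] := leqP (n_neg_queries (queried k s)) k.
  by rewrite -{1 2}(queried_all_of_few_neg few); apply: Q_min.
have [good good01] := errH_le_exists errHS; rewrite mistakesS => good_few.
have /prefixP[r s_eq] := queried_prefix k s.
move: s_sorted good_few Q_min many; set Q := queried k s; rewrite s_eq.
rewrite (sorted_pairwise (@ge_fst_trans R)) pairwise_cat => /and3P[sep _ _].
by move=> good_few Q_min many; apply: (prefix_minimizer sep many good01 good_few Q_min).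
Qed.
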